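(* Let $(X_n)_{n\ge1}$ and $(Y_n)_{n\ge1}$ be two sequences of random variables on a common probability space such that $0\le X_n\le\kappa Y_n$ for some positive constant $\kappa$ (with $0<\mathbb{E}(Y_n)<\infty$). If $Y_n/\mathbb{E}(Y_n)\to1$ in probability, then $$\frac{\mathbb{E}(X_n)}{\mathbb{E}(Y_n)}\to0\iff\frac{X_n}{Y_n}\to0\text{ in probability}.$$ If, in addition, $\mathbb{E}(X_n)\ge\tau\mathbb{E}(Y_n)$ for some $\tau>0$ and $Y_n/\mathbb{E}(Y_n)\to1$ in quadratic mean, then $$\frac{X_n}{\mathbb{E}(X_n)}\to1\text{ in probability}\implies\frac{\mathrm{Var}(X_n)}{[\mathbb{E}(X_n)]^2}\to0.$$ *)

From HB Require Import structures.
From mathcomp Require Import all_boot all_order all_algebra.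
From mathcomp Require Import all_classical all_reals all_analysis.
Set Implicit Arguments. Unset Strict Implicit. Unset Printing Implicit Defensive.
Import Order.TTheory GRing.Theory Num.Theory.
Import numFieldNormedType.Exports.
Local Open Scope classical_set_scope.
Local Open Scope ring_scope.

Definition cvg_in_prob {d} {T : measurableType d} {R : realType}
  (P : probability T R) (Z : nat -> T -> R) (c : R) : Prop :=
  forall eps : R, 0 < eps ->
    (fun n => P [set w | eps <= `|Z n w - c|]) @ \oo --> 0%E.

Definition cvg_in_qm {d} {T : measurableType d} {R : realType}
  (P : probability T R) (Z : nat -> T -> R) (c : R) : Prop :=
  (fun n => ('E_P[fun w => ((Z n w - c) ^+ 2)%R])%E) @ \oo --> 0%E.

(* With W_n := Y_n / E Y_n we have W_n >= 0, E W_n = 1 and W_n -> 1 in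
   probability, so Scheffe's argument gives E |W_n - 1| -> 0.  Each claim then
   follows by integrating a pointwise inequality that separates the event where
   the relevant ratio is far from its limit, whose probability vanishes, from
   its complement.  For the variance, Z_n := X_n / E X_n <= (kappa / tau) W_n
   bounds (Z_n - 1)^2 on that event by a multiple of (W_n - 1)^2 + 1, which the
   quadratic-mean hypothesis controls. *)

From HB Require Import structures.
From mathcomp Require Import all_boot all_order all_algebra.
From mathcomp Require Import all_classical all_reals all_analysis.
From mathcomp Require Import ring lra measurable_realfun.
Import Order.TTheory GRing.Theory Num.Theory.
Import numFieldNormedType.Exports.
Local Open Scope classical_set_scope.
Local Open Scope ring_scope.

Section pointwise_bounds.
Variable R : realFieldType.
Implicit Types x y a c eps del : R.

Lemma indic_ratio_ge_le eps x y a : 0 < eps -> 0 <= x -> 0 <= y -> 0 < a ->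
  (eps <= x / y)%R%:R <= 2 / eps * (x / a) + (2^-1 <= `|y / a - 1|)%R%:R.
Proof.
move=> eps0 x0 y0 a0.
have xa0 : 0 <= 2 / eps * (x / a) by rewrite !mulr_ge0 ?invr_ge0 // ltW.
have [_|] := leP 2^-1 `|y / a - 1|; first by case: (eps <= x / y) => /=; lra.
rewrite ltr_norml => /andP[ya_lo _].
case: (leP eps (x / y)) => /= [eps_le|_]; rewrite addr0 //.
(* recall [x / 0 = 0] *)
have y_gt0 : 0 < y.
  by rewrite lt0r y0 andbT; apply: contraTneq eps_le => ->; rewrite invr0 mulr0 -ltNge.
have eps_ya : eps * (y / a) <= x / a.
  by rewrite mulrA ler_wpM2r ?invr_ge0 ?(ltW a0) // -ler_pdivlMr.
have := ler_wpM2l (ltW (divr_gt0 (ltr0Sn _ 1) eps0)) eps_ya.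
by rewrite (mulrA (2 / eps) eps) divfK ?gt_eqF //; lra.
Qed.

Lemma ler_ratio_split eps kappa x y a : 0 <= eps -> 0 <= kappa ->
  0 <= x -> x <= kappa * y -> 0 <= y -> 0 < a ->
  x / a <= eps * (y / a) + kappa * (`|y / a - 1| + (eps <= x / y)%R%:R).
Proof.
move=> eps0 k0 x0 xky y0 a0.
have div_a u v : u <= v -> u / a <= v / a.
  by move=> uv; rewrite ler_wpM2r ?invr_ge0 ?(ltW a0).
have eps_ya : 0 <= eps * (y / a) by rewrite mulr_ge0 ?divr_ge0 ?(ltW a0).
have ya_le : y / a <= `|y / a - 1| + 1 by have := ler_norm (y / a - 1); lra.
case: (leP eps (x / y)) => [_|xy_lt] /=.
  have := ler_wpM2l k0 ya_le; have := div_a _ _ xky; rewrite -mulrA; lra.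
have x_le : x <= eps * y.
  have := y0; rewrite le_eqVlt => /predU1P[y_eq0|y_gt0].
    by move: xky; rewrite -y_eq0 !mulr0.
  by rewrite ltW // -ltr_pdivrMr.
have := div_a _ _ x_le; rewrite -mulrA addr0.
have : 0 <= kappa * `|y / a - 1| by rewrite mulr_ge0.
lra.
Qed.

Lemma abs_sub1_le_split del w : 0 <= del -> 0 <= w ->
  `|w - 1| <= 2 * del - 1 + w + 2 * (del <= `|w - 1|)%R%:R.
Proof.
move=> del0 w0; case: (leP del `|w - 1|) => [_|] /=.
  have : `|w - 1| <= w + 1 by rewrite ler_norml; apply/andP; split; lra.
  lra.
rewrite ltr_norml => /andP[w_lo _]; rewrite mulr0 addr0.
by rewrite ler_norml; apply/andP; split; lra.
Qed.

Lemma sqr_sub1_le_split c del z w : 0 <= z -> z <= c * w ->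
  (z - 1) ^+ 2 <= del ^+ 2 + 4 * c ^+ 2 * (w - 1) ^+ 2
                  + (4 * c ^+ 2 + 2) * (del <= `|z - 1|)%R%:R.
Proof.
move=> z0 zcw.
have z2 : z ^+ 2 <= c ^+ 2 * w ^+ 2 by rewrite -exprMn lerXn2r ?nnegrE // (le_trans z0).
have c2 : 0 <= c ^+ 2 by exact: sqr_ge0.
case: (leP del `|z - 1|) => [_|near1] /=.
  have : c ^+ 2 * w ^+ 2 <= c ^+ 2 * (2 * (w - 1) ^+ 2 + 2).
    by apply: ler_wpM2l => //; have := sqr_ge0 (w - 2); nra.
  have := sqr_ge0 del; nra.
rewrite mulr0 addr0.
have : (z - 1) ^+ 2 <= del ^+ 2.
  rewrite -real_normK ?num_real //; apply: lerXn2r; rewrite ?nnegrE ?(ltW near1) //.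
  exact: le_trans (ltW near1).
have : 0 <= 4 * c ^+ 2 * (w - 1) ^+ 2 by rewrite mulr_ge0 ?sqr_ge0 // mulr_ge0.
lra.
Qed.

End pointwise_bounds.

Lemma indic_boolE {T : Type} {R : pzRingType} (p : pred T) (x : T) :
  \1_[set w | p w] x = (p x)%:R :> R.
Proof.
rewrite indicE; case: (boolP (p x)) => px; first by rewrite mem_set.
by rewrite memNset //; apply/negP.
Qed.

Section measurable_comparison_sets.
Context d (T : measurableType d) (R : realType).
Implicit Types f g : T -> R.

Lemma measurable_ler_set f g : measurable_fun setT f -> measurable_fun setT g ->
  measurable [set w | f w <= g w].
Proof. by move=> mf mg; rewrite -[X in measurable X]setTI; exact: measurable_fun_le. Qed.

Lemma measurable_ltr_set f g : measurable_fun setT f -> measurable_fun setT g ->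
  measurable [set w | f w < g w].
Proof.
move=> mf mg; rewrite (_ : [set w | _] = ~` [set w | g w <= f w]).
  exact/measurableC/measurable_ler_set.
by apply/seteqP; split => w /=; rewrite ltNge => /negP.
Qed.

End measurable_comparison_sets.

Lemma nonneg_cvge0P {R : realType} {U : Type} {F : set_system U} {FF : ProperFilter F}
    (u : U -> \bar R) : (forall x, 0 <= u x)%E ->
  u @ F --> 0%E <-> forall e : R, 0 < e -> \forall x \near F, (u x <= e%:E)%E.
Proof.
move=> u0; split.
- move=> /fine_cvgP[ufin /cvgr0Pnorm_le cu] e e0.
  apply: filterS2 ufin (cu e e0) => x /=; move: (u0 x).
  by case: (u x) => //= r _ _ h; rewrite lee_fin (le_trans (ler_norm r) h).
- move=> ue; apply/fine_cvgP; split.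
  + by apply: filterS (ue 1 ltr01) => x; move: (u0 x); case: (u x).
  + apply/cvgr0Pnorm_le => e e0; apply: filterS (ue e e0) => x /=.
    by move: (u0 x); case: (u x) => //= r; rewrite !lee_fin => r0; rewrite ger0_norm.
Qed.

Section nonneg_expectation.
Context d (T : measurableType d) (R : realType) (P : probability T R).
Implicit Types f g h : T -> R.

Lemma ge0_expectationD f g : measurable_fun setT f -> measurable_fun setT g ->
  (forall x, 0 <= f x) -> (forall x, 0 <= g x) ->
  ('E_P[f \+ g] = 'E_P[f] + 'E_P[g])%E.
Proof.
move=> mf mg f0 g0; rewrite !unlock; under eq_integral do rewrite EFinD.
by apply: ge0_integralD => //; [move=> x _; rewrite lee_fin|exact/measurable_EFinP
  |move=> x _; rewrite lee_fin|exact/measurable_EFinP].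
Qed.

Lemma ge0_expectationZl f (k : R) : 0 <= k -> measurable_fun setT f ->
  (forall x, 0 <= f x) -> ('E_P[fun x => (k * f x)%R] = k%:E * 'E_P[f])%E.
Proof.
move=> k0 mf f0; rewrite !unlock; under eq_integral do rewrite EFinM.
by apply: ge0_integralZl => //; [exact/measurable_EFinP|move=> x _; rewrite lee_fin].
Qed.

Lemma expectation_le_affine f g h (a b c r s : R) :
  measurable_fun setT f -> measurable_fun setT g -> measurable_fun setT h ->
  (forall x, 0 <= f x) -> (forall x, 0 <= g x) -> (forall x, 0 <= h x) ->
  0 <= b -> 0 <= c -> ('E_P[g] <= r%:E)%E -> ('E_P[h] <= s%:E)%E ->
  (forall x, f x <= a + b * g x + c * h x) ->
  ('E_P[f] <= (a + b * r + c * s)%:E)%E.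
Proof.
move=> mf mg mh f0 g0 h0 b0 c0 Eg Eh fle.
(* No integrability is assumed, so only nonnegative functions are added: the
   negative part of [a] is moved to the left-hand side. *)
pose ap := Num.max a 0; pose an := Num.max (- a) 0.
have ap0 : 0 <= ap by rewrite le_max lexx orbT.
have an0 : 0 <= an by rewrite le_max lexx orbT.
have a_split : a = ap - an.
  rewrite /ap /an; case: (leP a 0) => a0.
    by rewrite max_l ?oppr_ge0 // sub0r opprK.
  by rewrite max_r ?subr0 // oppr_le0 ltW.
have mbg : measurable_fun setT (fun x => b * g x) by exact: measurable_funM.
have mch : measurable_fun setT (fun x => c * h x) by exact: measurable_funM.
have bg0 x : 0 <= b * g x by exact: mulr_ge0.
have ch0 x : 0 <= c * h x by exact: mulr_ge0.
have : ('E_P[f \+ cst an]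
         <= 'E_P[((cst ap \+ (fun x => b * g x)) \+ (fun x => c * h x))%R])%E.
  apply: expectation_le.
  - by apply: measurable_funD.
  - by apply: measurable_funD => //; apply: measurable_funD.
  - by move=> x; rewrite addr_ge0.
  - by move=> x; rewrite !addr_ge0.
  - by apply: aeW => x /=; have := fle x; lra.
rewrite ge0_expectationD // 2?ge0_expectationD //; last 2 first.
- by apply: measurable_funD.
- by move=> x; rewrite addr_ge0.
rewrite !expectation_cst !ge0_expectationZl //.
have Ef0 := expectation_ge0 P f0; have Eg0 := expectation_ge0 P g0.
have Eh0 := expectation_ge0 P h0.
move: Eg Eh Ef0 Eg0 Eh0; case: ('E_P[g])%E => [x||] //; case: ('E_P[h])%E => [y||] //.
case: ('E_P[f])%E => [z||] //; rewrite !lee_fin => xr ys _ _ _.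
have := ler_wpM2l b0 xr; have := ler_wpM2l c0 ys; lra.
Qed.

Lemma scheffe_in_prob (W : nat -> T -> R) : (forall n, measurable_fun setT (W n)) ->
  (forall n x, 0 <= W n x) -> (forall n, 'E_P[W n] = 1)%E -> cvg_in_prob P W 1 ->
  (fun n => 'E_P[fun w => `|W n w - 1|%R]%E) @ \oo --> 0%E.
Proof.
move=> mW W0 EW cW.
apply/nonneg_cvge0P => [n|e e0]; first exact: expectation_ge0.
pose del := e / 4; have del0 : 0 < del by rewrite divr_gt0.
pose C n := [set w | del <= `|W n w - 1|].
have mC n : measurable (C n).
  by apply: measurable_ler_set => //; apply: measurableT_comp => //; apply: measurable_funB.
near=> n.
have PC : (P (C n) <= del%:E)%E.
  by near: n; exact: (nonneg_cvge0P _ (fun n => measure_ge0 P (C n))).1 (cW _ del0) _ del0.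
apply: le_trans.
  apply: (@expectation_le_affine _ (W n) (\1_(C n)) (2 * del - 1) 1 2 1 del) => //.
  - by apply: measurableT_comp => //; apply: measurable_funB.
  - by rewrite EW.
  - by rewrite expectation_indic.
  - by move=> w; rewrite mul1r indic_boolE abs_sub1_le_split // ltW.
by rewrite lee_fin /del; lra.
Unshelve. all: by end_near.
Qed.

Lemma variance_scaleE (X : T -> R) (k : R) : measurable_fun setT X ->
  ('V_P[X] * (k ^+ 2)%:E = 'E_P[fun w => ((k * (X w - fine 'E_P[X])) ^+ 2)%R])%E.
Proof.
move=> mX; rewrite /variance covariance.unlock muleC -ge0_expectationZl.
- by congr ('E_P[_])%E; apply/funext => w /=; rewrite exprMn expr2.
- exact: sqr_ge0.
- by apply: measurable_funM; apply: measurable_funB.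
- by move=> w; rewrite /= -expr2 sqr_ge0.
Qed.

End nonneg_expectation.

Section ratio_convergence.
Context {d} {T : measurableType d} {R : realType} {P : probability T R}.
Context {X Y : nat -> {RV P >-> R}} {kappa : R}.
Hypothesis kappa_gt0 : 0 < kappa.
Hypothesis XY_bound : forall n w, 0 <= X n w /\ X n w <= kappa * Y n w.
Hypothesis EY_gt0_fin : forall n, (0 < 'E_P[Y n])%E /\ ('E_P[Y n] < +oo)%E.

Let a n := fine 'E_P[Y n].
Let b n := fine 'E_P[X n].
Let W n w := Y n w / a n.
Let V n w := X n w / a n.

Hypothesis W_cvg1 : cvg_in_prob P W 1.

Let X_ge0 n w : 0 <= X n w. Proof. by case: (XY_bound n w). Qed.
Let X_le n w : X n w <= kappa * Y n w. Proof. by case: (XY_bound n w). Qed.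
Let Y_ge0 n w : 0 <= Y n w.
Proof. by rewrite -(pmulr_rge0 _ kappa_gt0) (le_trans (X_ge0 n w) (X_le n w)). Qed.
Let mX n : measurable_fun setT (X n). Proof. exact: measurable_funPT. Qed.
Let mY n : measurable_fun setT (Y n). Proof. exact: measurable_funPT. Qed.

Let EY_fin n : ('E_P[Y n] = (a n)%:E)%E.
Proof. by have [EY0 EYoo] := EY_gt0_fin n; rewrite fineK // ge0_fin_numE // ltW. Qed.

Let a_gt0 n : 0 < a n.
Proof. by rewrite -lte_fin -EY_fin; case: (EY_gt0_fin n). Qed.

Let EX_fin n : ('E_P[X n] = (b n)%:E)%E.
Proof.
have : ('E_P[X n] <= (0 + kappa * a n + 0 * a n)%:E)%E.
  apply: (@expectation_le_affine _ _ _ P (X n) (Y n) (Y n));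
    rewrite ?EY_fin ?(ltW kappa_gt0) // => w.
  by rewrite add0r mul0r addr0.
move=> EX_le; rewrite fineK // ge0_fin_numE ?expectation_ge0 //.
exact: le_lt_trans EX_le (ltry _).
Qed.

Let b_ge0 n : 0 <= b n.
Proof. by rewrite -lee_fin -EX_fin expectation_ge0. Qed.

Let mW n : measurable_fun setT (W n). Proof. exact: measurable_funM. Qed.
Let W_ge0 n w : 0 <= W n w. Proof. by rewrite divr_ge0 // ltW. Qed.

Let EW n : ('E_P[W n] = 1)%E.
Proof.
rewrite /W; under eq_fun do rewrite mulrC.
by rewrite ge0_expectationZl ?invr_ge0 ?(ltW (a_gt0 n)) // EY_fin -EFinM mulVf // gt_eqF.
Qed.

Let mV n : measurable_fun setT (V n). Proof. exact: measurable_funM. Qed.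
Let V_ge0 n w : 0 <= V n w. Proof. by rewrite divr_ge0 // ltW. Qed.

Let EV n : ('E_P[V n] = (b n / a n)%:E)%E.
Proof.
rewrite /V; under eq_fun do rewrite mulrC.
by rewrite ge0_expectationZl ?invr_ge0 ?(ltW (a_gt0 n)) // EX_fin -EFinM mulrC.
Qed.

Let ratio_ge eps n := [set w | eps <= `|X n w / Y n w - 0|].

Let measurable_ratio_ge eps n : 0 < eps -> measurable (ratio_ge eps n).
Proof.
move=> eps0.
(* The event is rewritten without the division, recalling [x / 0 = 0]. *)
rewrite (_ : ratio_ge eps n = [set w | 0 < Y n w] `&` [set w | eps * Y n w <= X n w]).
  by apply: measurableI; [apply: measurable_ltr_set|apply: measurable_ler_set];
    rewrite //; apply: measurable_funM.
apply/seteqP; split => w; rewrite /ratio_ge /= subr0 ger0_norm ?divr_ge0 //.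
  have := Y_ge0 n w; rewrite le_eqVlt => /predU1P[<-|Y_gt0].
    by rewrite invr0 mulr0 => /(lt_le_trans eps0); rewrite ltxx.
  by rewrite ler_pdivlMr.
by case=> Y_gt0; rewrite ler_pdivlMr.
Qed.

Lemma ratio_cvg_in_prob0 : (fun n => b n / a n) @ \oo --> 0 ->
  cvg_in_prob P (fun n w => X n w / Y n w) 0.
Proof.
move=> ba0 eps eps0; apply/nonneg_cvge0P => [n|e e0]; first exact: measure_ge0.
pose C n := [set w | 2^-1 <= `|W n w - 1|].
have e_eps : 0 < e * eps / 4 by rewrite !divr_gt0 ?mulr_gt0.
near=> n.
have ba_le : b n / a n <= e * eps / 4.
  near: n; apply: filterS ((cvgr0Pnorm_le _).1 ba0 _ e_eps) => n.
  by rewrite ger0_norm // divr_ge0 ?b_ge0 // ltW.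
have PC : (P (C n) <= (e / 2)%:E)%E.
  near: n; apply: (nonneg_cvge0P _ (fun n => measure_ge0 P (C n))).1.
    by apply: W_cvg1; rewrite invr_gt0.
  by rewrite divr_gt0.
have mC : measurable (C n).
  by apply: measurable_ler_set => //; apply: measurableT_comp => //; apply: measurable_funB.
rewrite -(expectation_indic P (measurable_ratio_ge _ n eps0)).
apply: le_trans.
  apply: (@expectation_le_affine _ _ _ P _ (V n) (\1_(C n))
    0 (2 / eps) 1 (b n / a n) (e / 2)); rewrite ?divr_ge0 ?(ltW eps0) //.
  - exact: measurable_indic (measurable_ratio_ge _ _ eps0).
  - by rewrite EV.
  - by rewrite expectation_indic.
  - move=> w; rewrite add0r mul1r /ratio_ge !indic_boolE subr0.
    rewrite ger0_norm ?divr_ge0 //.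
    exact: indic_ratio_ge_le eps0 (X_ge0 n w) (Y_ge0 n w) (a_gt0 n).
rewrite lee_fin add0r mul1r.
have : 2 / eps * (b n / a n) <= 2 / eps * (e * eps / 4).
  by apply: ler_wpM2l => //; rewrite divr_ge0 // ltW.
have -> : 2 / eps * (e * eps / 4) = e / 2 by field; rewrite gt_eqF.
lra.
Unshelve. all: by end_near.
Qed.

Lemma mean_ratio_cvg0 : cvg_in_prob P (fun n w => X n w / Y n w) 0 ->
  (fun n => b n / a n) @ \oo --> 0.
Proof.
move=> XY0; apply/cvgr0Pnorm_le => e e0.
pose eps := e / 3; have eps0 : 0 < eps by rewrite divr_gt0.
pose eta := e / (3 * kappa); have eta0 : 0 < eta by rewrite divr_gt0 ?mulr_gt0.
have mWB1 n : measurable_fun setT (fun w => `|W n w - 1|).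
  by apply: measurableT_comp => //; apply: measurable_funB.
near=> n.
have PB : (P (ratio_ge eps n) <= eta%:E)%E.
  by near: n; exact: (nonneg_cvge0P _ (fun n => measure_ge0 P _)).1 (XY0 _ eps0) _ eta0.
have EWB1 : ('E_P[fun w => `|W n w - 1|%R] <= eta%:E)%E.
  near: n.
  apply: (nonneg_cvge0P _ (fun n => expectation_ge0 _ (fun w => normr_ge0 _))).1 => //.
  exact: scheffe_in_prob mW W_ge0 EW W_cvg1.
rewrite ger0_norm ?divr_ge0 ?b_ge0 ?(ltW (a_gt0 n)) // -lee_fin.
rewrite -EV; apply: le_trans.
  apply: (@expectation_le_affine _ _ _ P _ (W n)
    (fun w => `|W n w - 1| + \1_(ratio_ge eps n) w) 0 eps kappa 1 (eta + eta)) => //.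
  - exact: measurable_funD (mWB1 n) (measurable_indic (measurable_ratio_ge _ _ eps0)).
  - exact: ltW.
  - exact: ltW.
  - by rewrite EW.
  - have mB : measurable_fun setT (\1_(ratio_ge eps n) : T -> R).
      exact/measurable_indic/measurable_ratio_ge.
    rewrite ge0_expectationD // (expectation_indic P (measurable_ratio_ge _ _ eps0)).
    by rewrite EFinD leeD.
  - move=> w; rewrite add0r /ratio_ge indic_boolE subr0 (ger0_norm (divr_ge0 _ _)) //.
    exact: ler_ratio_split (ltW eps0) (ltW kappa_gt0) (X_ge0 n w) (X_le n w) (Y_ge0 n w)
      (a_gt0 n).
have -> : kappa * (eta + eta) = 2 * e / 3 by rewrite /eta; field; rewrite gt_eqF.
by rewrite lee_fin /eps; lra.
Unshelve. all: by end_near.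
Qed.

Lemma variance_ratio_cvg0 tau : 0 < tau ->
  (forall n, tau%:E * 'E_P[Y n] <= 'E_P[X n])%E ->
  cvg_in_qm P W 1 -> cvg_in_prob P (fun n w => X n w / b n) 1 ->
  (fun n => 'V_P[X n] * ((b n) ^- 2)%:E)%E @ \oo --> 0%E.
Proof.
move=> tau0 tau_EXY W_qm Z_cvg1.
have tau_ab n : tau * a n <= b n by move: (tau_EXY n); rewrite EY_fin EX_fin -EFinM lee_fin.
have b_gt0 n : 0 < b n by exact: lt_le_trans (mulr_gt0 tau0 (a_gt0 n)) (tau_ab n).
pose c := kappa / tau; pose Z n w := X n w / b n.
have Z_le n w : Z n w <= c * W n w.
  have -> : c * W n w = kappa * Y n w / (tau * a n).
    by rewrite /c /W; field; rewrite ?gt_eqF ?a_gt0.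
  apply: le_trans (_ : kappa * Y n w / b n <= _).
    by rewrite ler_wpM2r ?invr_ge0 ?(ltW (b_gt0 n)).
  by rewrite ler_wpM2l ?mulr_ge0 ?(ltW kappa_gt0) // lef_pV2 ?posrE ?mulr_gt0.
have VZ n : ('V_P[X n] * ((b n) ^- 2)%:E = 'E_P[fun w => ((Z n w - 1) ^+ 2)%R])%E.
  rewrite -exprVn variance_scaleE //; congr ('E_P[_])%E; apply/funext => w.
  by rewrite /Z -/(b n); congr (_ ^+ 2); field; rewrite gt_eqF.
under eq_fun do rewrite VZ.
apply/nonneg_cvge0P => [n|e e0]; first by apply: expectation_ge0 => w; exact: sqr_ge0.
have c2_ge0 : 0 <= c ^+ 2 := sqr_ge0 c.
pose del := Num.min 1 (e / 3); have del0 : 0 < del by rewrite lt_min ltr01 divr_gt0.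
pose eta := e / (3 * (4 * c ^+ 2 + 2)).
have eta0 : 0 < eta by rewrite divr_gt0 // mulr_gt0 // ltr_wpDl // mulr_ge0.
have mZ1 n : measurable_fun setT (fun w => Z n w - 1).
  by apply: measurable_funB => //; exact: measurable_funM.
pose A n := [set w | del <= `|Z n w - 1|].
have mA n : measurable (A n).
  by apply: measurable_ler_set => //; exact: measurableT_comp.
near=> n.
have EW2 : ('E_P[fun w => ((W n w - 1) ^+ 2)%R] <= eta%:E)%E.
  near: n; apply: (nonneg_cvge0P _ (fun n => expectation_ge0 _ (fun w => sqr_ge0 _))).1 => //.
have PA : (P (A n) <= eta%:E)%E.
  by near: n; exact: (nonneg_cvge0P _ (fun n => measure_ge0 P (A n))).1 (Z_cvg1 _ del0) _ eta0.
apply: le_trans.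
  apply: (@expectation_le_affine _ _ _ P _ (fun w => (W n w - 1) ^+ 2) (\1_(A n))
    (del ^+ 2) (4 * c ^+ 2) (4 * c ^+ 2 + 2) eta eta) => //.
  - exact: measurable_funX.
  - by apply: measurable_funX; apply: measurable_funB.
  - by move=> w; exact: sqr_ge0.
  - by move=> w; exact: sqr_ge0.
  - exact: mulr_ge0.
  - by apply: addr_ge0 => //; exact: mulr_ge0.
  - by rewrite expectation_indic.
  - move=> w; rewrite /A indic_boolE; apply: sqr_sub1_le_split (Z_le n w).
    by rewrite divr_ge0 // ltW.
have del_le : del ^+ 2 <= e / 3.
  apply: le_trans (_ : del <= _); last by rewrite ge_min lexx orbT.
  by rewrite expr2 ler_piMr ?ge_min ?lexx // ltW.
have eta_e : (4 * c ^+ 2 + 2) * eta = e / 3.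
  by rewrite /eta; field; rewrite gt_eqF // ltr_wpDl // mulr_ge0.
rewrite mulrDl in eta_e; rewrite lee_fin; lra.
Unshelve. all: by end_near.
Qed.

End ratio_convergence.

Theorem lemma4p2 (d : measure_display) (T : measurableType d) (R : realType)
  (P : probability T R) (X Y : nat -> {RV P >-> R}) (kappa : R) :
  0 < kappa ->
  (forall n w, 0 <= X n w /\ X n w <= kappa * Y n w) ->
  (forall n, (0 < 'E_P[Y n])%E /\ ('E_P[Y n] < +oo)%E) ->
  cvg_in_prob P (fun n w => Y n w / fine ('E_P[Y n])%E) 1 ->
  ( ((fun n => fine ('E_P[X n])%E / fine ('E_P[Y n])%E) @ \oo --> 0)
      <-> cvg_in_prob P (fun n w => X n w / Y n w) 0 )
  /\
  (forall tau : R, 0 < tau ->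
     (forall n, (tau%:E * 'E_P[Y n] <= 'E_P[X n])%E) ->
     cvg_in_qm P (fun n w => Y n w / fine ('E_P[Y n])%E) 1 ->
     cvg_in_prob P (fun n w => X n w / fine ('E_P[X n])%E) 1 ->
     (fun n => ('V_P[X n] * ((fine ('E_P[X n])%E) ^- 2)%:E)%E) @ \oo --> 0%E).
Proof.
move=> kappa_gt0 XY_bound EY_gt0_fin W_cvg1; split; first split.
- exact: (ratio_cvg_in_prob0 kappa_gt0 XY_bound EY_gt0_fin W_cvg1).
- exact: (mean_ratio_cvg0 kappa_gt0 XY_bound EY_gt0_fin W_cvg1).
- move=> tau; exact: (variance_ratio_cvg0 kappa_gt0 XY_bound EY_gt0_fin).
Qed.
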